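(* Let $\mathcal{A}$ be a finite or countable alphabet, $\mathcal{M}$ a countable set of probability measures on $\mathcal{A}^\infty$, $w:\mathcal{M}\to(0,1]$ a prior with $\sum_\nu w_\nu=1$, $\xi$ the Bayes mixture and $\mu\in\mathcal{M}$. If $\mathrm{Ent}(w)<\infty$, then $\mathbb{E}_\mu C_\infty\le \mathrm{Ent}(w)/w_\mu$ and $\lim_{t\to\infty}c_t=0$ with $\mu$-probability $1$.
   Context: $\mathcal{A}^\infty$ carries the $\sigma$-algebra generated by cylinders $\Gamma_x=\{x\omega\}$; for a measure $\rho$, $\rho(x):=\rho(\Gamma_x)$, $\rho(y|x):=\rho(xy)/\rho(x)$. Bayes mixture: $\xi(A):=\sum_{\nu\in\mathcal{M}}w_\nu\nu(A)$; posterior $w_\nu(x):=w_\nu\nu(x)/\xi(x)$. Entropy $\mathrm{Ent}(w):=-\sum_\nu w_\nu\ln w_\nu$ (natural logs). For a finite string $x$ and $\nu\in\mathcal{M}$, $d_x(\nu,\xi):=\sum_{a\in\mathcal{A}}\nu(a|x)\ln\frac{\nu(a|x)}{\xi(a|x)}$. For $\omega\in\mathcal{A}^\infty$, $c_t(\omega):=\sum_{\nu\in\mathcal{M}}w_\nu(\omega_{<t})\,d_{\omega_{<t}}(\nu,\xi)$ where $\omega_{<t}=\omega_1\cdots\omega_{t-1}$, and $C_\infty:=\sum_{t=1}^\infty c_t$. $\mathbb{E}_\mu$ denotes expectation w.r.t. $\mu$. *)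

From HB Require Import structures.
From mathcomp Require Import all_boot all_order all_algebra.
From mathcomp Require Import all_classical all_reals all_analysis.
Set Implicit Arguments. Unset Strict Implicit. Unset Printing Implicit Defensive.
Import Order.TTheory GRing.Theory Num.Theory.
Local Open Scope classical_set_scope.
Local Open Scope ring_scope.

Section Defs.
Variables (A : pointedType).

(** omega_{<n+1} = omega_1 ... omega_n ; we index omega from 0 *)
Definition prefix (om : nat -> A) (n : nat) : seq A := [seq om i | i <- iota 0 n].

Definition cyl (x : seq A) : set (nat -> A) := [set om | prefix om (size x) = x].

Definition cylinders : set (set (nat -> A)) := [set cyl x | x in [set: seq A]].

Definition seqspace := g_sigma_algebraType cylinders.
End Defs.


Section Mixture.
Variables (A : pointedType) (R : realType) (I : choiceType).
Variables (nu : I -> probability (seqspace A) R) (w : I -> R).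
Local Open Scope ereal_scope.

(** rho(x) := rho(Gamma_x) (real-valued; probability measures are finite) *)
Definition cylm (P : set (seqspace A) -> \bar R) (x : seq A) : R := fine (P (cyl x)).

Definition condm (P : set (seqspace A) -> \bar R) (a : A) (x : seq A) : R :=
  (cylm P (rcons x a) / cylm P x)%R.

Definition xi (S : set (seqspace A)) : \bar R :=
  \esum_(i in [set: I]) (w i)%:E * nu i S.

Definition post (i : I) (x : seq A) : R := (w i * cylm (nu i) x / cylm xi x)%R.

Definition Ent : \bar R := \esum_(i in [set: I]) (- (w i * ln (w i)))%:E.

(** d_x(nu, xi) := sum_a nu(a|x) ln (nu(a|x)/xi(a|x)); the (possibly infinite)
    series over the countable alphabet is taken as
    (sum of positive parts) - (sum of negative parts) *)
Definition dterm (i : I) (x : seq A) (a : A) : R :=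
  (condm (nu i) a x * ln (condm (nu i) a x / condm xi a x))%R.

Definition dKL (i : I) (x : seq A) : \bar R :=
  \esum_(a in [set: A]) (Num.max (dterm i x a) 0%R)%:E
  - \esum_(a in [set: A]) (Num.max (- dterm i x a)%R 0%R)%:E.

(** c_t(omega) := sum_nu w_nu(omega_{<t}) d_{omega_{<t}}(nu, xi), t >= 1;
    omega_{<t} = omega_1 ... omega_{t-1} = prefix omega (t-1) *)
Definition c (t : nat) (om : seqspace A) : \bar R :=
  \esum_(i in [set: I]) (post i (prefix om t.-1))%:E * dKL i (prefix om t.-1).

Definition Cinf (om : seqspace A) : \bar R := \sum_(1 <= t <oo) c t om.

End Mixture.

From Pilot Require Import Defs.
From HB Require Import structures.
From mathcomp Require Import all_boot all_order all_algebra.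
From mathcomp Require Import all_classical all_reals all_analysis.
From mathcomp Require Import measurable_realfun.
From mathcomp.algebra_tactics Require Import ring lra.
Import Order.TTheory GRing.Theory Num.Theory.
Set Implicit Arguments. Unset Strict Implicit. Unset Printing Implicit Defensive.
Local Open Scope classical_set_scope.
Local Open Scope ring_scope.

(* For each nu, the potential g_nu(x) = nu(x) ln(nu(x)/xi(x)) + xi(x) - nu(x) is
   nonnegative, and since xi(a|x) = xi(xa)/xi(x) the divergence is its increment:
   nu(x) d_x(nu,xi) + g_nu(x) = sum_a g_nu(xa).  Summing over the strings of
   length n, the nu-expected divergence accumulated before time n equals
   sum_{|x|=n} g_nu(x) <= -ln w_nu, because xi >= w_nu nu.  Dominance
   mu <= xi / w_mu gives mu(x) w_nu(x) <= w_nu nu(x) / w_mu, hence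
   E_mu C_oo <= sum_nu w_nu (-ln w_nu) / w_mu = Ent(w) / w_mu.  A finite
   expectation makes C_oo finite mu-almost surely, and then c_t --> 0.
   Over an infinite alphabet d_x is a difference of two sums; Gibbs'
   inequality p - q <= p ln(p/q) bounds its negative part by 1. *)

Section Cylinders.
Variable A : pointedType.

Lemma size_prefix (om : nat -> A) n : size (Defs.prefix om n) = n.
Proof. by rewrite /Defs.prefix size_map size_iota. Qed.

Lemma prefixS (om : nat -> A) n :
  Defs.prefix om n.+1 = rcons (Defs.prefix om n) (om n).
Proof. by rewrite /Defs.prefix -addn1 iotaD map_cat cats1 add0n. Qed.

Lemma cyl_nil : cyl ([::] : seq A) = setT.
Proof. by apply/seteqP; split => // om _; rewrite /cyl /= /Defs.prefix. Qed.

Lemma cyl_rcons (x : seq A) a (om : nat -> A) :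
  cyl (rcons x a) om <-> cyl x om /\ om (size x) = a.
Proof.
rewrite /cyl /= size_rcons prefixS; split.
  by move/eqP; rewrite eqseq_rcons => /andP[/eqP -> /eqP ->].
by case=> -> ->.
Qed.

Lemma cyl_bigcup_rcons (x : seq A) : cyl x = \bigcup_(a in setT) cyl (rcons x a).
Proof.
apply/seteqP; split => om.
  by move=> xom; exists (om (size x)) => //; apply/cyl_rcons.
by case=> a _ /cyl_rcons[].
Qed.

Lemma trivIset_cyl_rcons (x : seq A) : trivIset setT (fun a => cyl (rcons x a)).
Proof. by move=> a b _ _ [om [/cyl_rcons[_ <-] /cyl_rcons[_ <-]]]. Qed.

Lemma cyl_prefix (x : seq A) (om : nat -> A) n :
  size x = n -> cyl x om <-> x = Defs.prefix om n.
Proof. by move=> <-; rewrite /cyl /=; split => ->//; rewrite size_prefix. Qed.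

Lemma measurable_cyl (x : seq A) : measurable (cyl x : set (seqspace A)).
Proof. by apply: sub_sigma_algebra; exists x. Qed.

End Cylinders.

Lemma countable_injective (U : Type) : countable [set: U] ->
  exists f : U -> nat, injective f.
Proof.
by move=> /countable_injP[f injf]; exists f => u v; apply: injf; exact: in_setT.
Qed.

Lemma countable_seq (A : Type) : countable [set: A] -> countable [set: seq A].
Proof.
move=> /countable_injective[f injf]; apply/countable_injP.
exists (fun s => pickle (map f s)) => s t _ _ /(pcan_inj pickleK).
by apply: inj_map.
Qed.

Section CountableSums.
Local Open Scope ereal_scope.
Variable R : realType.

Lemma countable_cancel (U : choiceType) (u0 : U) : countable [set: U] ->
  exists (f : U -> nat) (g : nat -> U), cancel f g.
Proof.
move=> /countable_injective[f injf].
by exists f, (fun n => xget u0 [set u | f u = n]) => u; apply: xget_unique => // v /injf.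
Qed.

Lemma esum_cancel_series (U : choiceType) (f : U -> nat) (g : nat -> U)
  (a : U -> \bar R) : cancel f g -> (forall u, 0 <= a u) ->
  \esum_(u in [set: U]) a u = \sum_(i <oo | i \in range f) a (g i).
Proof.
move=> fK a0; rewrite -esum_set_image//.
- congr esum; apply/seteqP; split => // u _; exists (f u); last exact: fK.
  by exists u.
- by move=> n m; rewrite !inE => -[u _ <-] [v _ <-]; rewrite !fK; move->.
Qed.

Lemma measure_bigcup_countable d (T : measurableType d) (U : choiceType)
  (mu : {measure set T -> \bar R}) (F : U -> set T) :
  countable [set: U] -> (forall u, measurable (F u)) -> trivIset setT F ->
  mu (\bigcup_(u in setT) F u) = \esum_(u in setT) mu (F u).
Proof.
move=> cU mF tF.
have [[u0 _]|nU] := pselect (exists u : U, True); last first.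
  have -> : [set: U] = set0 by apply/seteqP; split => // u; case: nU; exists u.
  by rewrite bigcup_set0 measure0 esum_set0.
have [f [g fK]] := countable_cancel u0 cU.
rewrite (esum_cancel_series fK)//.
have -> : \bigcup_(u in setT) F u = \bigcup_(n in range f) F (g n).
  apply/seteqP; split => x.
    by case=> u _ Fx; exists (f u); [exists u|rewrite fK].
  by case=> n _ Fx; exists (g n).
rewrite (measure_bigcup _ _ (fun n => F (g n)))// => n m [u _ <-] [v _ <-].
by rewrite !fK => /(tF u v I I) ->.
Qed.

Lemma ge0_integral_esum d (T : measurableType d) (U : choiceType)
  (mu : {measure set T -> \bar R}) (D : set T) (h : U -> T -> \bar R) :
  measurable D -> countable [set: U] ->
  (forall u, measurable_fun D (h u)) -> (forall u x, 0 <= h u x) ->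
  \int[mu]_(x in D) (\esum_(u in setT) h u x) =
  \esum_(u in setT) \int[mu]_(x in D) h u x.
Proof.
move=> mD cU mh h0.
have [[u0 _]|nU] := pselect (exists u : U, True); last first.
  have -> : [set: U] = set0 by apply/seteqP; split => // u; case: nU; exists u.
  by rewrite esum_set0 integral0_eq// => x _; rewrite esum_set0.
have [f [g fK]] := countable_cancel u0 cU.
rewrite (esum_cancel_series fK); last by move=> u; apply: integral_ge0.
under eq_integral do rewrite (esum_cancel_series fK)// eseries_mkcond.
rewrite eseries_mkcond integral_nneseries//.
- apply: congr_lim; apply/funext => n; apply: eq_bigr => i _.
  by case: ifP => _ //; rewrite integral0_eq.
- by move=> n; case: (n \in range f) => //; exact: measurable_cst.
- by move=> n x _; case: (n \in range f).
Qed.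

Lemma esumZl (T : choiceType) (S : set T) (a : T -> \bar R) (r : R) :
  (forall i, 0 <= a i) -> (0 <= r)%R ->
  \esum_(i in S) (r%:E * a i) = r%:E * \esum_(i in S) a i.
Proof.
move=> a0 r0; rewrite /esum -ereal_supZl//; last first.
  by apply/set0P; exists 0; exists set0; [exact: fsets_set0|rewrite fsbig_set0].
congr ereal_sup; apply/seteqP; split => z.
- case=> X [fX XS] <-.
  exists (\sum_(x \in X) a x); first by exists X.
  by rewrite !fsbig_finite// ge0_sume_distrr.
- case=> _ [X [fX XS] <-] <-.
  by exists X => //; rewrite !fsbig_finite// ge0_sume_distrr.
Qed.

Lemma exchange_esum (T1 T2 : choiceType) (P : set T1) (Q : set T2)
  (a : T1 -> T2 -> \bar R) : (forall i j, 0 <= a i j) ->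
  \esum_(i in P) \esum_(j in Q) a i j = \esum_(j in Q) \esum_(i in P) a i j.
Proof.
move=> a0; rewrite !esum_esum//.
rewrite (reindex_esum (Q `*`` (fun=> P)) _ (fun x => (x.2, x.1)))//; split=> //=.
- by move=> [i j] [/=].
- by move=> [i1 i2] [j1 j2] /= _ _ [] -> ->.
- by move=> [i1 i2] [Pi1 Qi2] /=; exists (i2, i1).
Qed.

Lemma le_term_esum (T : choiceType) (S : set T) (a : T -> \bar R) i :
  S i -> (forall j, 0 <= a j) -> a i <= \esum_(j in S) a j.
Proof.
move=> Si a0; apply: esum_ge; exists [set i].
  by split; [exact: finite_set1|move=> j ->].
by rewrite fsbig_set1.
Qed.

Lemma esum_single (T : choiceType) (a : T -> \bar R) i :
  (forall j, j <> i -> a j = 0) -> 0 <= a i ->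
  \esum_(j in [set: T]) a j = a i.
Proof.
move=> a0 ai0; rewrite (esumID [set i]); last first.
  by move=> j _; case: (pselect (j = i)) => [->|/a0->].
by rewrite setTI esum_set1// esum1 ?adde0// => j [_ /a0].
Qed.

End CountableSums.

Section Levels.
Local Open Scope ereal_scope.
Variables (R : realType) (A : pointedType).

Definition level n : set (seq A) := [set x | size x = n].

Lemma level0 : level 0 = [set [::]].
Proof. by apply/seteqP; split => x; rewrite /level /=; [move/size0nil|move=> ->]. Qed.

Lemma esum_level_succ (f : seq A -> \bar R) n : (forall x, 0 <= f x) ->
  \esum_(y in level n.+1) f y =
  \esum_(x in level n) \esum_(a in [set: A]) f (rcons x a).
Proof.
move=> f0; rewrite (esum_esum (J := fun=> [set: A]))//.
apply: (reindex_esum _ _ (fun p => rcons p.1 p.2)); split.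
- by move=> [x a] [/= sx _]; rewrite /level /= size_rcons sx.
- move=> [x a] [y b] _ _ /= /eqP; rewrite eqseq_rcons => /andP[/eqP-> /eqP->]//.
- move=> y; rewrite /level /=; case/lastP: y => [//|y a].
  by rewrite size_rcons => -[sy]; exists (y, a).
Qed.

Lemma esum_level_consistent (m : seq A -> \bar R) n : (forall x, 0 <= m x) ->
  (forall x, \esum_(a in [set: A]) m (rcons x a) = m x) ->
  \esum_(x in level n) m x = m [::].
Proof.
move=> m0 mS; elim: n => [|n IH]; first by rewrite level0 esum_set1.
by rewrite esum_level_succ//; under eq_esum do rewrite mS.
Qed.

Hypothesis cA : countable [set: A].

Lemma measurable_fun_prefix (G : seq A -> \bar R) n :
  measurable_fun [set: seqspace A] (fun om : seqspace A => G (Defs.prefix om n)).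
Proof.
move=> _ B mB; rewrite setTI.
have -> : (fun om : seqspace A => G (Defs.prefix om n)) @^-1` B =
    \bigcup_(x in [set: seq A])
      ((cyl x : set (seqspace A)) `&` [set _ | size x = n /\ B (G x)]).
  apply/seteqP; split => om.
    move=> /= Bom; exists (Defs.prefix om n) => //; split => //.
      by rewrite /cyl /= size_prefix.
    by rewrite size_prefix.
  by case=> x _ [/cyl_prefix xom [sx Bx]] /=; rewrite -(xom _ sx).
apply: countable_bigcupT_measurable; first exact: countable_seq.
move=> x; case: (pselect (size x = n /\ B (G x))) => h.
  rewrite (_ : [set _ | _] = setT) ?setIT; first exact: measurable_cyl.
  by apply/seteqP; split.
by rewrite (_ : [set _ | _] = set0) ?setI0//; apply/seteqP; split.
Qed.

Lemma integral_prefix (mu : {measure set (seqspace A) -> \bar R})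
  (G : seq A -> \bar R) n : (forall x, 0 <= G x) ->
  \int[mu]_(om in [set: seqspace A]) G (Defs.prefix om n) =
  \esum_(x in level n) (mu (cyl x) * G x).
Proof.
move=> G0.
have mcyl x : measurable_fun [set: seqspace A]
    (fun om => (\1_(cyl x : set (seqspace A)) om : R)%:E).
  by apply/measurable_EFinP; apply: measurable_indic; exact: measurable_cyl.
pose h (x : seq A) (om : seqspace A) :=
  if size x == n then G x * (\1_(cyl x : set (seqspace A)) om)%:E else 0.
have h0 x om : 0 <= h x om.
  by rewrite /h; case: ifP => // _; apply: mule_ge0 => //; rewrite lee_fin.
transitivity (\int[mu]_(om in [set: seqspace A]) \esum_(x in [set: seq A]) h x om).
  apply: eq_integral => om _; rewrite (esum_single (i := Defs.prefix om n))//.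
    rewrite /h size_prefix eqxx indicE mem_set ?mule1//.
    by rewrite /cyl /= size_prefix.
  move=> x xom; rewrite /h; case: eqP => // sx.
  by rewrite indicE memNset ?mule0// => /(cyl_prefix _ sx).
rewrite ge0_integral_esum//; last 2 first.
- exact: countable_seq.
- move=> x; rewrite /h; case: (size x == n); last exact: measurable_cst.
  exact: measurable_funeM.
rewrite [RHS]esum_mkcond; apply: eq_esum => x _.
rewrite /h /level; case: eqP => sx; last by rewrite memNset// integral0_eq.
rewrite mem_set// ge0_integralZl// integral_indic ?setIT 1?muleC//.
exact: measurable_cyl.
Qed.

End Levels.

Section RealFacts.
Variable R : realType.

Lemma sub_le_mul_ln_div (a b : R) : 0 < a -> 0 < b -> a - b <= a * ln (a / b).
Proof.
move=> a0 b0.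
have ln_le : ln (b / a) <= b / a - 1.
  have := @le_ln1Dx R (b / a - 1); rewrite [1 + _]addrC subrK; apply.
  by rewrite ltrBrDr addNr divr_gt0.
have := ler_wpM2l (ltW a0) ln_le.
have -> : a * (b / a - 1) = b - a by rewrite mulrBr mulr1 mulrC divfK ?gt_eqF.
rewrite -invf_div lnV ?posrE ?divr_gt0// mulrN.
lra.
Qed.

Lemma max0_subN (d : R) : Num.max d 0 - Num.max (- d) 0 = d.
Proof. by rewrite !maxEle; case: ifP => h1; case: ifP => h2; lra. Qed.

Lemma fineK01 (e : \bar R) : (0 <= e)%E -> (e <= 1)%E -> (fine e)%:E = e.
Proof. by move=> e0 e1; rewrite fineK// ge0_fin_numE// (le_lt_trans e1)// ltry. Qed.

Lemma cancel_balance (P G : \bar R) (a b c e : R) : (0 <= P)%E -> 0 < a ->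
  (a%:E * P + b%:E + c%:E = G + c%:E + (a * e)%:E)%E ->
  (a%:E * (P - e%:E) + b%:E = G)%E.
Proof.
move=> P0 a0; case: P P0 => [p _|_|//].
- case: G => [g||] //= H.
  have {}H : a * p + b + c = g + c + a * e by apply: EFin_inj; rewrite !EFinD EFinM.
  by rewrite -EFinB -EFinM -EFinD; congr EFin; rewrite mulrBr; lra.
- rewrite gt0_muley ?lte_fin// !addye//.
  by case: G => [g||] //=; rewrite -!EFinD.
Qed.

End RealFacts.

Section Mixture.
Local Open Scope ereal_scope.
Variables (A : pointedType) (cA : countable [set: A]) (R : realType) (I : choiceType)
  (nu : I -> probability (seqspace A) R) (w : I -> R)
  (w_gt0 : forall i, (0 < w i)%R) (w_le1 : forall i, (w i <= 1)%R)
  (w_sum : \esum_(i in [set: I]) (w i)%:E = 1).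

Local Notation mnu i x := (cylm (nu i) x).
Local Notation mxi x := (cylm (xi nu w) x).

Lemma nu_cylE i x : nu i (cyl x) = (mnu i x)%:E.
Proof. by rewrite /cylm fineK01// probability_le1//; exact: measurable_cyl. Qed.

Lemma mnu_ge0 i x : (0 <= mnu i x)%R.
Proof. by rewrite -lee_fin -nu_cylE. Qed.

Lemma mnu_le1 i x : (mnu i x <= 1)%R.
Proof. by rewrite -lee_fin -nu_cylE probability_le1//; exact: measurable_cyl. Qed.

Lemma mnu_nil i : mnu i [::] = 1%R.
Proof. by apply/EFin_inj; rewrite -nu_cylE cyl_nil probability_setT. Qed.

Lemma esum_mnu_rcons i x :
  \esum_(a in [set: A]) (mnu i (rcons x a))%:E = (mnu i x)%:E.
Proof.
under eq_esum do rewrite -nu_cylE.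
rewrite -nu_cylE [cyl x]cyl_bigcup_rcons measure_bigcup_countable//.
- by move=> a; exact: measurable_cyl.
- exact: trivIset_cyl_rcons.
Qed.

Lemma mnu_rcons_le i x a : (mnu i (rcons x a) <= mnu i x)%R.
Proof.
rewrite -lee_fin -[(mnu i x)%:E]esum_mnu_rcons.
by apply: (le_term_esum (S := [set: A]) (a := fun b => (mnu i (rcons x b))%:E) (i := a)) => // b;
  rewrite lee_fin mnu_ge0.
Qed.

Lemma mnu_rcons_eq0 i x a : mnu i x = 0%R -> mnu i (rcons x a) = 0%R.
Proof. by move=> mnu0; apply/eqP; rewrite eq_le mnu_ge0 andbT -mnu0 mnu_rcons_le. Qed.

Lemma mnu_eq0_or_gt0 i x : mnu i x = 0%R \/ (0 < mnu i x)%R.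
Proof. by have := mnu_ge0 i x; rewrite le_eqVlt => /orP[/eqP <-|]; [left|right]. Qed.

Lemma wmnu_ge0 i x : (0 <= w i * mnu i x)%R.
Proof. by rewrite mulr_ge0 ?mnu_ge0// ltW. Qed.

Lemma xi_cylE x : xi nu w (cyl x) = \esum_(i in [set: I]) (w i * mnu i x)%:E.
Proof. by apply: eq_esum => i _; rewrite nu_cylE. Qed.

Lemma xi_cyl_ge0 x : 0 <= xi nu w (cyl x).
Proof. by rewrite xi_cylE esum_ge0// => i _; rewrite lee_fin wmnu_ge0. Qed.

Lemma xi_cyl_le1 x : xi nu w (cyl x) <= 1.
Proof.
by rewrite xi_cylE -w_sum le_esum// => i _; rewrite lee_fin ler_piMr ?mnu_le1// ltW.
Qed.

Lemma mxiE x : (mxi x)%:E = \esum_(i in [set: I]) (w i * mnu i x)%:E.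
Proof. by rewrite -xi_cylE /cylm fineK01 ?xi_cyl_ge0 ?xi_cyl_le1. Qed.

Lemma mxi_ge0 x : (0 <= mxi x)%R.
Proof. by rewrite -lee_fin mxiE esum_ge0// => i _; rewrite lee_fin wmnu_ge0. Qed.

Lemma mxi_ge i x : (w i * mnu i x <= mxi x)%R.
Proof.
rewrite -lee_fin mxiE.
by apply: (le_term_esum (S := [set: I]) (a := fun j => (w j * mnu j x)%:E) (i := i)) => // j;
  rewrite lee_fin wmnu_ge0.
Qed.

Lemma mxi_gt0 i x : (0 < mnu i x)%R -> (0 < mxi x)%R.
Proof. by move=> mnu_gt0; apply: lt_le_trans (mxi_ge i x); exact: mulr_gt0. Qed.

Lemma mxi_nil : mxi [::] = 1%R.
Proof.
by apply/EFin_inj; rewrite mxiE -w_sum; apply: eq_esum => i _; rewrite mnu_nil mulr1.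
Qed.

Lemma esum_mxi_rcons x : \esum_(a in [set: A]) (mxi (rcons x a))%:E = (mxi x)%:E.
Proof.
under eq_esum do rewrite mxiE.
rewrite exchange_esum; last by move=> *; rewrite lee_fin wmnu_ge0.
rewrite mxiE; apply: eq_esum => i _.
under eq_esum do rewrite EFinM.
by rewrite esumZl ?esum_mnu_rcons ?ltW// => a; rewrite lee_fin mnu_ge0.
Qed.

Lemma esum_level_mnu i n : \esum_(x in level n) (mnu i x)%:E = 1.
Proof.
rewrite (esum_level_consistent (m := fun x => (mnu i x)%:E)) ?mnu_nil//.
- by move=> x; rewrite lee_fin mnu_ge0.
- exact: esum_mnu_rcons.
Qed.

Lemma esum_level_mxi n : \esum_(x in level n) (mxi x)%:E = 1.
Proof.
rewrite (esum_level_consistent (m := fun x => (mxi x)%:E)) ?mxi_nil//.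
- by move=> x; rewrite lee_fin mxi_ge0.
- exact: esum_mxi_rcons.
Qed.

Let ell i x := ln (mnu i x / mxi x).
Let pot i x := (mnu i x * ell i x + mxi x - mnu i x)%R.

Lemma pot_ge0 i x : (0 <= pot i x)%R.
Proof.
rewrite /pot /ell; case: (mnu_eq0_or_gt0 i x) => [->|mnu_gt0].
  by rewrite mul0r add0r subr0 mxi_ge0.
have := sub_le_mul_ln_div mnu_gt0 (mxi_gt0 mnu_gt0); lra.
Qed.

Lemma pot_le i x : (pot i x + mnu i x <= mnu i x * (- ln (w i)) + mxi x)%R.
Proof.
rewrite /pot /ell; case: (mnu_eq0_or_gt0 i x) => [->|mnu_gt0].
  by rewrite !mul0r !add0r subr0 addr0.
have xi_gt0 := mxi_gt0 mnu_gt0.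
have ell_le : (ln (mnu i x / mxi x) <= - ln (w i))%R.
  rewrite -lnV ?posrE// ler_ln ?posrE ?invr_gt0 ?divr_gt0//.
  by rewrite ler_pdivrMr// mulrC ler_pdivlMr// mulrC mxi_ge.
have := ler_wpM2l (ltW mnu_gt0) ell_le; lra.
Qed.

Lemma pot_nil i : pot i [::] = 0%R.
Proof. by rewrite /pot /ell mnu_nil mxi_nil divr1 ln1 mulr0 add0r subrr. Qed.

Section Telescope.
Variables (i : I) (x : seq A).
Hypothesis mnu_gt0 : (0 < mnu i x)%R.

Let p a := (mnu i (rcons x a) / mnu i x)%R.
Let q a := (mxi (rcons x a) / mxi x)%R.
Let d := dterm nu w i x.
Let dpos := \esum_(a in [set: A]) (Num.max (d a) 0)%:E.
Let dneg := \esum_(a in [set: A]) (Num.max (- d a) 0)%:E.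

Let dE a : d a = (p a * ln (p a / q a))%R. Proof. by []. Qed.
Let dKLE : dKL nu w i x = dpos - dneg. Proof. by []. Qed.
Let p_ge0 a : (0 <= p a)%R. Proof. by rewrite divr_ge0 ?mnu_ge0// ltW. Qed.
Let q_ge0 a : (0 <= q a)%R.
Proof. by rewrite divr_ge0 ?mxi_ge0// ltW// (mxi_gt0 mnu_gt0). Qed.
Let max0_ge0 (r : R) : (0 <= Num.max r 0)%R. Proof. by rewrite le_max lexx orbT. Qed.

Lemma esum_cond_nu : \esum_(a in [set: A]) (p a)%:E = 1.
Proof.
under eq_esum do rewrite /p mulrC EFinM.
rewrite esumZl ?esum_mnu_rcons ?invr_ge0 ?mnu_ge0 -?EFinM ?mulVf ?gt_eqF// => a.
by rewrite lee_fin mnu_ge0.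
Qed.

Lemma esum_cond_xi : \esum_(a in [set: A]) (q a)%:E = 1.
Proof.
have xi_gt0 := mxi_gt0 mnu_gt0.
under eq_esum do rewrite /q mulrC EFinM.
rewrite esumZl ?esum_mxi_rcons ?invr_ge0 ?mxi_ge0 -?EFinM ?mulVf ?gt_eqF// => a.
by rewrite lee_fin mxi_ge0.
Qed.

Lemma dterm_ge a : (p a - q a <= d a)%R.
Proof.
rewrite dE; case: (mnu_eq0_or_gt0 i (rcons x a)) => [mnu0|mnu_xa_gt0].
  by rewrite /p mnu0 !mul0r sub0r oppr_le0 q_ge0.
apply: sub_le_mul_ln_div; apply: divr_gt0 => //; first exact: mxi_gt0 mnu_xa_gt0.
exact: mxi_gt0 mnu_gt0.
Qed.

Lemma dneg_le1 : dneg <= 1.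
Proof.
rewrite -esum_cond_xi le_esum// => a _; rewrite lee_fin maxEle.
by case: ifP => _; [exact: q_ge0|have := dterm_ge a; have := p_ge0 a; lra].
Qed.

Lemma dneg_fin_num : dneg \is a fin_num.
Proof.
rewrite ge0_fin_numE ?(le_lt_trans dneg_le1) ?ltry//.
by apply: esum_ge0 => a _; rewrite lee_fin max0_ge0.
Qed.

Lemma dneg_le_dpos : dneg <= dpos.
Proof.
have gibbs : \esum_(a in [set: A]) ((Num.max (- d a) 0)%:E + (p a)%:E) <=
    \esum_(a in [set: A]) ((Num.max (d a) 0)%:E + (q a)%:E).
  apply: le_esum => a _; rewrite -!EFinD lee_fin.
  by have := dterm_ge a; rewrite !maxEle; case: ifP; case: ifP;
    have := p_ge0 a; have := q_ge0 a; lra.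
move: gibbs; rewrite !esumD ?esum_cond_nu ?esum_cond_xi ?leeD2rE// => a _;
  by rewrite lee_fin ?max0_ge0 ?p_ge0 ?q_ge0.
Qed.

Lemma mul_dterm a : (mnu i x * d a =
  mnu i (rcons x a) * ell i (rcons x a) - mnu i (rcons x a) * ell i x)%R.
Proof.
have xi_gt0 := mxi_gt0 mnu_gt0.
rewrite dE /p /q /ell; case: (mnu_eq0_or_gt0 i (rcons x a)) => [->|mnu_xa_gt0].
  by rewrite !(mul0r, mulr0) subrr.
have xi_xa_gt0 := mxi_gt0 mnu_xa_gt0.
have -> : (mnu i (rcons x a) / mnu i x / (mxi (rcons x a) / mxi x) =
    (mnu i (rcons x a) / mxi (rcons x a)) / (mnu i x / mxi x))%R.
  by field; rewrite !gt_eqF.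
by rewrite ln_div ?posrE ?divr_gt0//; field; rewrite gt_eqF.
Qed.

(* The pointwise form of the telescoping identity, arranged so that every
   term is nonnegative and can be summed over the alphabet. *)
Lemma pot_rcons a :
  (mnu i x * Num.max (d a) 0 + p a * pot i x + mxi (rcons x a) =
   pot i (rcons x a) + p a * mxi x + mnu i x * Num.max (- d a) 0)%R.
Proof.
have pmnu : (p a * mnu i x = mnu i (rcons x a))%R by rewrite /p divfK ?gt_eqF.
have dpm : (mnu i x * Num.max (d a) 0 - mnu i x * Num.max (- d a) 0 =
    mnu i x * d a)%R by rewrite -mulrBr max0_subN.
rewrite /pot !mulrDr mulrN mulrA pmnu.
have := mul_dterm a; lra.
Qed.

Lemma esum_pot_rcons_lhs : \esum_(a in [set: A])
    ((mnu i x * Num.max (d a) 0 + p a * pot i x + mxi (rcons x a))%R)%:E =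
  (mnu i x)%:E * dpos + (pot i x)%:E + (mxi x)%:E.
Proof.
have h1 a : 0 <= (mnu i x * Num.max (d a) 0)%:E.
  by rewrite lee_fin mulr_ge0 ?mnu_ge0 ?max0_ge0.
have h2 a : 0 <= (p a * pot i x)%:E by rewrite lee_fin mulr_ge0 ?p_ge0 ?pot_ge0.
under eq_esum do rewrite !EFinD.
rewrite esumD; last 2 first.
- by move=> a _; exact: adde_ge0 (h1 a) (h2 a).
- by move=> a _; rewrite lee_fin mxi_ge0.
rewrite esumD; last 2 first.
- by move=> a _; exact: h1.
- by move=> a _; exact: h2.
rewrite esum_mxi_rcons; congr (_ + _ + _).
- under eq_esum do rewrite EFinM.
  by rewrite esumZl ?mnu_ge0// => a; rewrite lee_fin max0_ge0.
- under eq_esum do rewrite mulrC EFinM.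
  by rewrite esumZl ?esum_cond_nu ?mule1 ?pot_ge0// => a; rewrite lee_fin p_ge0.
Qed.

Lemma esum_pot_rcons_rhs : \esum_(a in [set: A])
    ((pot i (rcons x a) + p a * mxi x + mnu i x * Num.max (- d a) 0)%R)%:E =
  \esum_(a in [set: A]) (pot i (rcons x a))%:E + (mxi x)%:E + (mnu i x)%:E * dneg.
Proof.
have h1 a : 0 <= (pot i (rcons x a))%:E by rewrite lee_fin pot_ge0.
have h2 a : 0 <= (p a * mxi x)%:E by rewrite lee_fin mulr_ge0 ?p_ge0 ?mxi_ge0.
under eq_esum do rewrite !EFinD.
rewrite esumD; last 2 first.
- by move=> a _; exact: adde_ge0 (h1 a) (h2 a).
- by move=> a _; rewrite lee_fin mulr_ge0 ?mnu_ge0 ?max0_ge0.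
rewrite esumD; last 2 first.
- by move=> a _; exact: h1.
- by move=> a _; exact: h2.
congr (_ + _ + _).
- under eq_esum do rewrite mulrC EFinM.
  by rewrite esumZl ?esum_cond_nu ?mule1 ?mxi_ge0// => a; rewrite lee_fin p_ge0.
- under eq_esum do rewrite EFinM.
  by rewrite esumZl ?mnu_ge0// => a; rewrite lee_fin max0_ge0.
Qed.

Lemma dKL_telescope_gt0 : (mnu i x)%:E * dKL nu w i x + (pot i x)%:E =
  \esum_(a in [set: A]) (pot i (rcons x a))%:E.
Proof.
rewrite dKLE -(fineK dneg_fin_num).
apply: (@cancel_balance _ _ _ _ _ (mxi x)) => //.
  by apply: esum_ge0 => a _; rewrite lee_fin max0_ge0.
rewrite EFinM (fineK dneg_fin_num) -esum_pot_rcons_lhs -esum_pot_rcons_rhs.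
by apply: eq_esum => a _; rewrite pot_rcons.
Qed.

End Telescope.

Lemma dKL_eq0 i x : mnu i x = 0%R -> dKL nu w i x = 0.
Proof.
move=> mnu0; have dterm0 a : dterm nu w i x a = 0%R.
  by rewrite /dterm /condm (mnu_rcons_eq0 a mnu0) !mul0r.
by rewrite /dKL !esum1 ?sube0// => a _; rewrite dterm0 ?oppr0 maxxx.
Qed.

Lemma dKL_ge0 i x : 0 <= dKL nu w i x.
Proof.
case: (mnu_eq0_or_gt0 i x) => [/dKL_eq0 -> //|mnu_gt0].
by rewrite /dKL suber_ge0 ?(dneg_fin_num mnu_gt0) ?(dneg_le_dpos mnu_gt0).
Qed.

Lemma dKL_telescope i x : (mnu i x)%:E * dKL nu w i x + (pot i x)%:E =
  \esum_(a in [set: A]) (pot i (rcons x a))%:E.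
Proof.
case: (mnu_eq0_or_gt0 i x) => [mnu0|]; last exact: dKL_telescope_gt0.
rewrite dKL_eq0// mule0 add0e /pot mnu0 mul0r add0r subr0.
under eq_esum do rewrite (mnu_rcons_eq0 _ mnu0) mul0r add0r subr0.
by rewrite esum_mxi_rcons.
Qed.

Lemma mnu_dKL_ge0 i x : 0 <= (mnu i x)%:E * dKL nu w i x.
Proof. by rewrite mule_ge0 ?dKL_ge0// lee_fin mnu_ge0. Qed.

Let exp_dKL i n := \esum_(x in level n) ((mnu i x)%:E * dKL nu w i x).

Lemma exp_dKL_ge0 i n : 0 <= exp_dKL i n.
Proof. by apply: esum_ge0 => x _; exact: mnu_dKL_ge0. Qed.

Lemma sum_exp_dKL i N :
  \sum_(0 <= n < N) exp_dKL i n = \esum_(x in level N) (pot i x)%:E.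
Proof.
have pot_ge0E x : 0 <= (pot i x)%:E by rewrite lee_fin pot_ge0.
elim: N => [|N IH]; first by rewrite big_nil level0 esum_set1 ?pot_nil.
rewrite big_nat_recr //= IH /exp_dKL -esumD => [|x _|x _]; last 2 first.
- exact: pot_ge0E.
- exact: mnu_dKL_ge0.
rewrite esum_level_succ; last exact: pot_ge0E.
by apply: eq_esum => x _; rewrite addeC dKL_telescope.
Qed.

Lemma esum_level_pot_le i N : \esum_(x in level N) (pot i x)%:E <= (- ln (w i))%:E.
Proof.
have lnw_ge0 : (0 <= - ln (w i))%R by rewrite oppr_ge0 ln_le0.
have : \esum_(x in level N) ((pot i x)%:E + (mnu i x)%:E) <=
    \esum_(x in level N) ((- ln (w i))%:E * (mnu i x)%:E + (mxi x)%:E).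
  by apply: le_esum => x _; rewrite -EFinM -!EFinD lee_fin mulrC pot_le.
rewrite !esumD; try by move=> x _; rewrite ?mule_ge0 ?lee_fin ?pot_ge0 ?mnu_ge0 ?mxi_ge0.
rewrite esumZl ?esum_level_mnu ?esum_level_mxi ?mule1 ?leeD2rE// => x.
by rewrite lee_fin mnu_ge0.
Qed.

Lemma nneseries_exp_dKL_le i : \sum_(n <oo) exp_dKL i n <= (- ln (w i))%:E.
Proof.
apply: lime_le; first by apply: is_cvg_nneseries => n _ _; exact: exp_dKL_ge0.
by apply: nearW => n; rewrite sum_exp_dKL esum_level_pot_le.
Qed.

Let wdKL x := \esum_(i in [set: I]) ((w i)%:E * ((mnu i x)%:E * dKL nu w i x)).

Lemma wdKL_ge0 x : 0 <= wdKL x.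
Proof. by apply: esum_ge0 => i _; rewrite mule_ge0 ?mnu_dKL_ge0// lee_fin ltW. Qed.

Lemma nneseries_wdKL_le : \sum_(n <oo) \esum_(x in level n) wdKL x <= Ent w.
Proof.
have wd_ge0 i x : 0 <= (w i)%:E * ((mnu i x)%:E * dKL nu w i x).
  by rewrite mule_ge0 ?mnu_dKL_ge0// lee_fin ltW.
rewrite nneseries_esumT => [|n]; last exact: esum_ge0 (fun x _ => wdKL_ge0 x).
rewrite (eq_esum (b := fun n => \esum_(i in [set: I]) \esum_(x in level n)
    ((w i)%:E * ((mnu i x)%:E * dKL nu w i x)))) => [|n _]; last exact: exchange_esum.
rewrite exchange_esum => [|n i]; last exact: esum_ge0.
apply: le_esum => i _.
rewrite (eq_esum (b := fun n => (w i)%:E * exp_dKL i n)) => [|n _]; last first.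
  by rewrite esumZl ?(ltW (w_gt0 i)) => // x; exact: mnu_dKL_ge0.
rewrite esumZl => [|n|]; [|exact: exp_dKL_ge0|exact: ltW].
rewrite -nneseries_esumT => [|n]; last exact: exp_dKL_ge0.
by rewrite -mulrN EFinM lee_wpmul2l ?lee_fin ?(ltW (w_gt0 i)) ?nneseries_exp_dKL_le.
Qed.

Let K x := \esum_(i in [set: I]) (post nu w i x)%:E * dKL nu w i x.

Lemma post_ge0 i x : (0 <= post nu w i x)%R.
Proof. by rewrite /post divr_ge0 ?mxi_ge0 ?wmnu_ge0. Qed.

Lemma K_ge0 x : 0 <= K x.
Proof. by apply: esum_ge0 => i _; rewrite mule_ge0 ?dKL_ge0// lee_fin post_ge0. Qed.

(* Dominance [w_m nu_m <= xi] turns the [nu_m]-weighted posterior into the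
   prior weight. *)
Lemma mnu_K_le m x : (mnu m x)%:E * K x <= ((w m)^-1)%:E * wdKL x.
Proof.
have [xi0|xi_neq0] := eqVneq (mxi x) 0%R.
  have mnu0 : mnu m x = 0%R.
    have := mxi_ge m x; rewrite xi0 => wmnu_le0.
    by apply/eqP; rewrite eq_le mnu_ge0 andbT -(pmulr_rle0 _ (w_gt0 m)).
  by rewrite mnu0 mul0e mule_ge0 ?wdKL_ge0// lee_fin invr_ge0 ltW.
have xi_gt0 : (0 < mxi x)%R by rewrite lt0r xi_neq0 mxi_ge0.
have -> : wdKL x = (mxi x)%:E * K x.
  rewrite -esumZl => [|i|]; last 2 first.
  - by rewrite mule_ge0 ?dKL_ge0// lee_fin post_ge0.
  - exact: mxi_ge0.
  apply: eq_esum => i _; rewrite !muleA -!EFinM /post; congr (_ * _); congr EFin.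
  by field; rewrite gt_eqF.
rewrite muleA -EFinM lee_wpmul2r ?K_ge0// lee_fin.
by rewrite mulrC ler_pdivlMr// mulrC mxi_ge.
Qed.

Lemma c_ge0 t om : 0 <= c nu w t om.
Proof. exact: K_ge0. Qed.

Lemma measurable_c t : measurable_fun [set: seqspace A] (c nu w t).
Proof. exact: (measurable_fun_prefix cA K t.-1). Qed.

Lemma integral_c m n : \int[nu m]_(om in [set: seqspace A]) c nu w n.+1 om =
  \esum_(x in level n) ((mnu m x)%:E * K x).
Proof.
rewrite (integral_prefix cA (nu m) n K_ge0).
by apply: eq_esum => x _; congr (_ * _); exact: nu_cylE.
Qed.

Lemma CinfE om : Cinf nu w om = \sum_(n <oo) c nu w n.+1 om.
Proof.
rewrite /Cinf -(nneseries_addn 1 (c_ge0^~ om)).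
by apply: eq_eseriesr => n _; rewrite addn1.
Qed.

Lemma Cinf_ge0 om : 0 <= Cinf nu w om.
Proof. by rewrite CinfE; apply: nneseries_ge0 => n _ _; exact: c_ge0. Qed.

Lemma measurable_Cinf : measurable_fun [set: seqspace A] (Cinf nu w).
Proof.
rewrite (_ : Cinf nu w = fun om => \sum_(n <oo | n \in xpredT) c nu w n.+1 om).
  exact: (ge0_emeasurable_sum (h := fun n om => c nu w n.+1 om) (P := xpredT)
    (fun n om _ _ => c_ge0 n.+1 om) (fun n _ => measurable_c n.+1)).
by apply/funext => om; rewrite CinfE.
Qed.

Lemma integral_Cinf_le m :
  \int[nu m]_(om in [set: seqspace A]) Cinf nu w om <= ((w m)^-1)%:E * Ent w.
Proof.
have winv_ge0 : (0 <= (w m)^-1)%R by rewrite invr_ge0 ltW.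
under eq_integral => om _ do rewrite CinfE.
rewrite integral_nneseries//; last 2 first.
- by move=> n; exact: measurable_c.
- by move=> n om _; exact: c_ge0.
rewrite (eq_eseriesr (fun n _ => integral_c m n)).
apply: le_trans (lee_nneseries _ (fun n _ => le_esum (fun x _ => mnu_K_le m x))) _.
  by move=> n _ _; apply: esum_ge0 => x _; rewrite mule_ge0 ?K_ge0// lee_fin mnu_ge0.
rewrite (eq_eseriesr (fun n _ => esumZl (level n) wdKL_ge0 winv_ge0)).
rewrite nneseriesZl => [|n _]; last exact: esum_ge0 (fun x _ => wdKL_ge0 x).
by rewrite lee_wpmul2l ?lee_fin// nneseries_wdKL_le.
Qed.

Lemma Ent_ge0 : 0 <= Ent w.
Proof.
apply: esum_ge0 => i _; rewrite lee_fin -mulrN mulr_ge0 ?(ltW (w_gt0 i))//.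
by rewrite oppr_ge0 ln_le0.
Qed.

Lemma ae_cvg_c m : Ent w < +oo ->
  {ae nu m, forall om, c nu w t om @[t --> \oo] --> 0}.
Proof.
move=> Ent_lt.
have Ent_fin : Ent w \is a fin_num by rewrite ge0_fin_numE// Ent_ge0.
have int_Cinf : (nu m).-integrable [set: seqspace A] (Cinf nu w).
  apply/integrableP; split; first exact: measurable_Cinf.
  under eq_integral => om _ do rewrite gee0_abs ?Cinf_ge0//.
  by apply: le_lt_trans (integral_Cinf_le m) _; rewrite -(fineK Ent_fin) -EFinM ltry.
apply: filterS (integrable_ae measurableT int_Cinf) => om /(_ Logic.I) Cinf_fin.
have Cinf_lt : \sum_(0 <= k <oo | true) c nu w k.+1 om < +oo.
  by rewrite -CinfE -ge0_fin_numE// Cinf_ge0.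
rewrite -cvg_shiftS /=.
(* [c_(N+1)] lies between [0] and the tail from [N] of the convergent series. *)
apply: (@squeeze_cvge _ _ _ _ (fun=> 0) _ _ _ _ (cvg_cst 0)
  (nneseries_tail_cvg Cinf_lt (fun k _ => c_ge0 k.+1 om))).
apply: nearW => N; rewrite c_ge0 /=.
have := nneseries_lim_ge (P := xpredT) (m := N) N.+1 (fun k _ _ => c_ge0 k.+1 om).
by rewrite big_nat1.
Qed.

End Mixture.

Theorem theorem4 (A : pointedType) (hA : countable [set: A])
  (R : realType) (I : choiceType) (hI : countable [set: I])
  (nu : I -> probability (seqspace A) R) (nu_inj : injective nu)
  (w : I -> R) (w_pos : forall i, 0 < w i) (w_le1 : forall i, w i <= 1)
  (w_sum : (\esum_(i in [set: I]) (w i)%:E = 1)%E)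
  (m : I)
  (hEnt : (Ent w < +oo)%E) :
  (\int[nu m]_(om in [set: seqspace A]) Cinf nu w om
     <= Ent w * ((w m)^-1)%:E)%E
  /\ {ae nu m, forall om, (c nu w t om @[t --> \oo] --> 0%E)}.
Proof.
split; last exact: (ae_cvg_c hA nu w_pos w_le1 w_sum m hEnt).
by rewrite muleC; exact: (integral_Cinf_le hA nu w_pos w_le1 w_sum m).
Qed.
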